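(* Let $G$ be a $2$-connected finite simple graph. Then $\mathrm{nRel}(G;p)$ is concave down for $p\in(0,1)$ sufficiently close to $1$; that is, there is $\varepsilon>0$ such that $\frac{d^2}{dp^2}\mathrm{nRel}(G;p)<0$ for all $p\in(1-\varepsilon,1)$.
   Context: For a graph $G$ on $n$ vertices, a connected set is a nonempty vertex subset $C$ such that the induced subgraph $G[C]$ is connected. The node reliability of $G$ is the polynomial \[ \mathrm{nRel}(G;p)=\sum_{C}p^{|C|}(1-p)^{n-|C|}, \] the sum over all connected sets $C$ of $G$. *)

From mathcomp Require Import all_boot all_order all_algebra.
Set Implicit Arguments. Unset Strict Implicit. Unset Printing Implicit Defensive.
Import Order.TTheory GRing.Theory Num.Theory.

(* A finite simple graph on vertex type T is a symmetric irreflexive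
   relation e : rel T (hypotheses stated in the theorem). *)

Definition induced_rel (T : finType) (e : rel T) (C : {set T}) : rel T :=
  [rel u v | [&& u \in C, v \in C & e u v]].

Definition connected_set (T : finType) (e : rel T) (C : {set T}) : bool :=
  (C != set0) &&
  [forall x in C, forall y in C, connect (induced_rel e C) x y].

(* 2-connected (Diestel): more than 2 vertices, and G - X connected
   for every vertex set X with |X| < 2. *)
Definition two_connected (T : finType) (e : rel T) : bool :=
  (2 < #|T|)%N && connected_set e setT &&
  [forall v : T, connected_set e (~: [set v])].

Local Open Scope ring_scope.

Definition nRel (R : nzRingType) (T : finType) (e : rel T) : {poly R} :=
  \sum_(C : {set T} | connected_set e C)
     'X ^+ #|C| * (1 - 'X) ^+ (#|T| - #|C|).

From mathcomp Require Import all_boot all_order all_algebra.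
From mathcomp Require Import ring lra.
Set Implicit Arguments. Unset Strict Implicit. Unset Printing Implicit Defensive.
Import Order.TTheory GRing.Theory Num.Theory.
Local Open Scope ring_scope.

(* Summing p^|C| (1-p)^(n-|C|) over all vertex sets C gives 1, so nRel is 1
   minus the same sum over the disconnected sets.  In a 2-connected graph the
   complement of at most one vertex is connected, so every disconnected set
   misses b >= 2 vertices, and then p^a (1-p)^b is strictly convex near p = 1:
   in its second derivative the term b(b-1) p^a (1-p)^(b-2) dominates
   -2ab p^(a-1) (1-p)^(b-1).  The empty set is disconnected, so the sum is
   nonempty and nRel'' < 0 near 1. *)

Section Bernstein.

Variable R : comNzRingType.

(* [bern #|C| #|~: C|] at p is the probability that exactly the vertices of C
   survive. *)
Definition bern (a b : nat) : {poly R} := 'X^a * (1 - 'X) ^+ b.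

Lemma sum_bern_subsets (T : finType) :
  \sum_(C : {set T}) bern #|C| (#|T| - #|C|) = 1.
Proof.
have := @bigA_distr {poly R} 0 1 *%R +%R T (fun _ => 'X) (fun _ => 1 - 'X).
rewrite (eq_bigr (fun _ => 1)) => [|i _]; last by rewrite [X in X = _]addrC; exact: subrK.
rewrite big1_eq => ->; apply: eq_bigr => C _.
rewrite (bigID (mem C)) /=.
under [X in X * _]eq_bigr => i -> do [].
under [X in _ * X]eq_bigr => i /negbTE -> do [].
rewrite !prodr_const -(cardC (mem C)) addKn.
by congr (_ * _ ^+ _); apply: eq_card.
Qed.

Lemma nRelE (T : finType) (e : rel T) :
  nRel R e = 1 - \sum_(C | ~~ connected_set e C) bern #|C| (#|T| - #|C|).
Proof.
by rewrite -(sum_bern_subsets T) (bigID (connected_set e)) /= addrK.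
Qed.

Lemma horner_deriv2_bern (a b : nat) (p : R) :
  ((bern a b)^`(2)).[p] =
    (a * a.-1)%:R * p ^+ a.-2 * (1 - p) ^+ b
  - (2 * a * b)%:R * p ^+ a.-1 * (1 - p) ^+ b.-1
  + (b * b.-1)%:R * p ^+ a * (1 - p) ^+ b.-2.
Proof.
rewrite derivSn derivn1 /bern.
rewrite !(derivD, derivM, derivMn, derivXn, deriv_exp, derivB, derivC, derivX, derivN).
rewrite !(hornerMn, hornerE) /=.
move: (p ^+ a.-2) (p ^+ a.-1) (p ^+ a) => A B C.
move: ((1 - p) ^+ b.-2) ((1 - p) ^+ b.-1) ((1 - p) ^+ b) => D E F.
ring.
Qed.

End Bernstein.

Lemma horner_deriv2_bern_gt0 (R : realFieldType) (a b : nat) (p : R) :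
  (2 <= b)%N -> 0 < p < 1 -> 2 * a%:R * (1 - p) < b.-1%:R * p ->
  0 < ((bern R a b)^`(2)).[p].
Proof.
case: b => [|[|c]] // _ /andP [p_gt0 p_lt1] hdom.
have q_gt0 : 0 < 1 - p by rewrite subr_gt0.
have qc_gt0 : 0 < (1 - p) ^+ c by rewrite exprn_gt0.
rewrite horner_deriv2_bern /=.
have p_ge0 := ltW p_gt0; have q_ge0 := ltW q_gt0.
have t3_ge0 : 0 <= (a * a.-1)%:R * p ^+ a.-2 * (1 - p) ^+ c.+2.
  by apply: mulr_ge0; [apply: mulr_ge0|]; rewrite ?ler0n ?exprn_ge0.
suff t12_gt0 : 0 < (c.+2 * c.+1)%:R * p ^+ a * (1 - p) ^+ c
                   - (2 * a * c.+2)%:R * p ^+ a.-1 * (1 - p) ^+ c.+1 by lra.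
case: a {t3_ge0} hdom => [|a] /= hdom.
  by rewrite muln0 mul0n !mul0r subr0 expr0 mulr1 mulr_gt0 ?ltr0n.
have -> : (c.+2 * c.+1)%:R * p ^+ a.+1 * (1 - p) ^+ c
          - (2 * a.+1 * c.+2)%:R * p ^+ a * (1 - p) ^+ c.+1
        = c.+2%:R * p ^+ a * (1 - p) ^+ c * (c.+1%:R * p - 2 * a.+1%:R * (1 - p)).
  by rewrite !natrM [p ^+ a.+1]exprS [(1 - p) ^+ c.+1]exprS; ring.
by rewrite !mulr_gt0 ?exprn_gt0 ?ltr0n // subr_gt0.
Qed.

Lemma horner_deriv2_bern_gt0_near1 (R : realFieldType) (n a b : nat) (p : R) :
  (a <= n)%N -> (2 <= b)%N -> p < 1 -> 2 * n%:R * (1 - p) < p ->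
  0 < ((bern R a b)^`(2)).[p].
Proof.
move=> a_le_n b_ge2 p_lt1 hdom.
have q_gt0 : 0 < 1 - p by rewrite subr_gt0.
have p_gt0 : 0 < p by apply: le_lt_trans hdom; rewrite !mulr_ge0 ?ler0n ?ltW.
apply: horner_deriv2_bern_gt0; rewrite ?p_gt0 ?p_lt1 //.
have a_le_n' : a%:R <= n%:R :> R by rewrite ler_nat.
have := ler_wpM2r (ltW q_gt0) a_le_n'.
have b1_ge1 : 1 <= b.-1%:R :> R by rewrite ler1n -ltnS prednK // ltnW.
have := ler_peMl (ltW p_gt0) b1_ge1.
lra.
Qed.

Lemma two_connected_card_setC (T : finType) (e : rel T) (C : {set T}) :
  two_connected e -> ~~ connected_set e C -> (1 < #|~: C|)%N.
Proof.
case/andP=> /andP [_ conn_T] /forallP conn_T1; apply: contraNT; rewrite -leqNgt.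
case: (posnP #|~: C|) => [/cards0_eq C'0 _ | C'_gt0 C'_le1].
  by rewrite -[C]setCK C'0 setC0.
have /cards1P [v C'v] : #|~: C| == 1%N by rewrite eqn_leq C'_le1.
by rewrite -[C]setCK C'v.
Qed.

Theorem lemma3p3 (R : realFieldType) (T : finType) (e : rel T)
  (e_sym : symmetric e) (e_irr : irreflexive e)
  (h2 : two_connected e) :
  exists eps : R, 0 < eps /\
    forall p : R, 1 - eps < p -> p < 1 ->
      ((nRel R e)^`(2)).[p] < 0.
Proof.
exists ((2 * #|T|).+1%:R^-1); split=> [|p near1 p_lt1]; first by rewrite invr_gt0 ltr0n.
have hdom : 2 * #|T|%:R * (1 - p) < p.
  have : (1 - p) * (2 * #|T|).+1%:R < 1.
    by rewrite -ltr_pdivlMr ?ltr0n // div1r ltrBlDr addrC -ltrBlDr.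
  by rewrite -addn1 natrD natrM; lra.
have term_gt0 C : ~~ connected_set e C -> 0 < ((bern R #|C| (#|T| - #|C|))^`(2)).[p].
  move=> disC; rewrite -(cardsC C) addKn.
  exact: horner_deriv2_bern_gt0_near1 (max_card _) (two_connected_card_setC h2 disC) _ hdom.
have set0_disconnected : ~~ connected_set e (set0 : {set T}) by rewrite /connected_set eqxx.
rewrite nRelE derivnB -polyC1 derivnC [in X in X - _]/= sub0r hornerN oppr_lt0.
rewrite raddf_sum horner_sum (bigD1 set0) //=.
apply: (lt_le_trans (term_gt0 _ set0_disconnected)); rewrite lerDl.
by apply: sumr_ge0 => C /andP [/term_gt0 /ltW].
Qed.
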